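(* Let $M$ be an algebraic number field of degree $m$ with ring of integers $\mathbb{Z}_M$ and integral basis $(1,\omega_2,\ldots,\omega_m)$. Let $\alpha$ be an algebraic integer over $M$ of degree $n$ over $M$, let $K=M(\alpha)$, and let $0\neq\mu\in\mathbb{Z}_M$. Let $S$ be the $m\times m$ matrix whose $j$-th row is $(1,\omega_2^{(j)},\ldots,\omega_m^{(j)})$, let $c_2$ be the row norm of $S^{-1}$ (the maximum over the rows of $S^{-1}$ of the sum of the absolute values of the entries of that row), and set \[ c_3=\frac{\sqrt[n]{\overline{|\mu|}}}{\overline{|\alpha|}},\qquad c_5=2c_2\,\overline{|\alpha|}. \] Suppose $X,Y\in\mathbb{Z}_M$ satisfy \[ N_{K/M}(X-\alpha Y)=\mu \] and $\overline{|Y|}>c_3$. Write $X=x_1+\omega_2x_2+\cdots+\omega_mx_m$ and $Y=y_1+\omega_2y_2+\cdots+\omega_my_m$ with $x_i,y_i\in\mathbb{Z}$, and put $A=\max(\max_i|x_i|,\max_i|y_i|)$. Then \[ A\le c_5\cdot\overline{|Y|}. \]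
   Context: Let $\sigma_1,\ldots,\sigma_m$ be the embeddings of $M$ into $\mathbb{C}$; for $\gamma\in M$ write $\gamma^{(j)}=\sigma_j(\gamma)$. Let $f(x)\in\mathbb{Z}_M[x]$ be the monic relative defining polynomial of $\alpha$ over $M$, and for $j=1,\ldots,m$ let $\alpha^{(j1)},\ldots,\alpha^{(jn)}$ be the roots of the polynomial obtained by applying $\sigma_j$ to the coefficients of $f$ (the relative conjugates of $\alpha$ over $M^{(j)}$). For an algebraic number $\gamma$, its size $\overline{|\gamma|}$ is the maximum of the absolute values of its conjugates; in particular $\overline{|\alpha|}=\max_{j,k}|\alpha^{(jk)}|$, $\overline{|Y|}=\max_j|Y^{(j)}|$, $\overline{|\mu|}=\max_j|\mu^{(j)}|$. *)

From HB Require Import structures.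
From mathcomp Require Import all_boot all_order all_algebra all_field.
Set Implicit Arguments. Unset Strict Implicit. Unset Printing Implicit Defensive.
Import Order.TTheory GRing.Theory Num.Theory.
Local Open Scope ring_scope.

Definition is_alg_int (R : nzRingType) (x : R) : Prop :=
  exists p : {poly int}, p \is monic /\ root (map_poly (fun z : int => z%:~R) p) x.

Definition relNorm (F : fieldType) (L : fieldExtType F) (b : L) : F :=
  \det (passmx.mxof (vbasis fullv) (vbasis fullv) (amull b)).

Definition cmax (I : finType) (f : I -> algC) : algC := \big[Num.max/0]_(i : I) f i.

Definition house (M : fieldType) (m : nat) (sigma : 'I_m -> {rmorphism M -> algC})
  (g : M) : algC := cmax (fun j : 'I_m => `|sigma j g|).

From HB Require Import structures.
From mathcomp Require Import all_boot all_order all_algebra all_field.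
From mathcomp Require Import ring.
Set Implicit Arguments. Unset Strict Implicit. Unset Printing Implicit Defensive.
Import Order.TTheory GRing.Theory Num.Theory.
Local Open Scope ring_scope.

(* Applying sigma_j to N_{K/M}(X - alpha Y) = mu factors sigma_j(mu) as the product
   over k of X^(j) - alpha^(jk) Y^(j), so one factor is at most the n-th root of the
   house of mu, which is below house(alpha) house(Y); hence
   |X^(j)| <= 2 house(alpha) house(Y) for every j.  Inverting the matrix S of the
   embeddings of the integral basis bounds every coordinate x_i (resp. y_i) by c2
   times max_j |X^(j)| (resp. house(Y)).  Finally house(alpha) >= 1, since the
   product of all conjugates of alpha is the absolute norm of a nonzero algebraic
   integer, i.e. a nonzero rational integer; this covers the y_i as well. *)

Section NonnegMax.
Variables (I : finType) (f : I -> algC).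
Hypothesis f_ge0 : forall i, 0 <= f i.

Let bigmax_ge0 (r : seq I) : 0 <= \big[Num.max/0]_(i <- r) f i.
Proof.
elim/big_rec: _ => // i x _ x_ge0.
by rewrite comparable_le_max ?x_ge0 ?orbT // real_comparable ?ger0_real.
Qed.

Lemma cmax_ge0 : 0 <= cmax f.
Proof. exact: bigmax_ge0. Qed.

Lemma cmax_ub i : f i <= cmax f.
Proof.
rewrite /cmax; elim: (index_enum I) (mem_index_enum i) => // j r IHr.
rewrite inE big_cons comparable_le_max ?real_comparable ?ger0_real ?bigmax_ge0 //.
by case/predU1P=> [->|/IHr->]; rewrite ?lexx ?orbT.
Qed.

Lemma cmax_le c : 0 <= c -> (forall i, f i <= c) -> cmax f <= c.
Proof.
move=> c_ge0 f_le; rewrite /cmax; elim/big_rec: _ => // i x _ x_le.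
have xR : x \is Num.real by rewrite (ler_real x_le) ger0_real.
by rewrite comparable_ge_max ?f_le ?x_le // (real_comparable (ger0_real (f_ge0 i)) xR).
Qed.

End NonnegMax.

Lemma exists_norm_le_of_prod (R : numDomainType) n (z : 'I_n -> R) r :
  (0 < n)%N -> 0 <= r -> `|\prod_k z k| <= r ^+ n -> exists k, `|z k| <= r.
Proof.
move=> n_gt0 r_ge0 prod_le; apply/existsP; apply: contraLR prod_le.
move=> /existsPn z_gt; rewrite -real_ltNge ?realE ?normr_ge0 ?exprn_ge0 //.
rewrite normr_prod -[in r ^+ n](card_ord n) -prodr_const ltr_prod //.
  by apply/hasP; exists (Ordinal n_gt0); rewrite ?mem_index_enum.
by move=> k _; rewrite r_ge0 real_ltNge ?z_gt ?ger0_real ?normr_ge0.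
Qed.

Lemma cmax_norm_ge1 (I : finType) (z : I -> algC) : (0 < #|I|)%N ->
  \prod_i z i \is a Num.int -> \prod_i z i != 0 -> 1 <= cmax (fun i => `|z i|).
Proof.
move=> I_gt0 prod_int prod_neq0; set c := cmax _.
have c_ge0 : 0 <= c by apply: cmax_ge0.
rewrite real_leNgt ?ger0_real //; apply/negP => c_lt1.
have := norm_intr_ge1 prod_int prod_neq0; apply/negP.
rewrite -real_ltNge ?ger0_real ?normr_ge0 //.
apply: (@le_lt_trans _ _ (c ^+ #|I|)); last by rewrite exprn_ilt1 // -lt0n.
rewrite normr_prod -prodr_const; apply: ler_prod => i _.
by rewrite normr_ge0; apply: (cmax_ub (fun i => normr_ge0 (z i))).
Qed.

Lemma bigmax_absz_le (R : numDomainType) m (x y : 'I_m -> int) (a : R) : 0 <= a ->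
    (forall i, `|(x i)%:~R : R| <= a) -> (forall i, `|(y i)%:~R : R| <= a) ->
  ((\max_(i < m) maxn `|x i|%N `|y i|%N)%N)%:R <= a.
Proof.
move=> a_ge0 x_le y_le; elim/big_ind: _ => // [u v u_le v_le|i]; first by rewrite /maxn; case: ifP.
by rewrite /maxn; case: ifP => _; rewrite natr_absz intr_norm.
Qed.

Lemma horner_char_poly (R : comNzRingType) d (B : 'M[R]_d) x :
  (char_poly B).[x] = \det (x%:M - B).
Proof.
rewrite /char_poly -horner_evalE -det_map_mx; congr (\det _); apply/matrixP => i j.
by rewrite !mxE /= horner_evalE hornerD hornerN hornerMn hornerX hornerC.
Qed.

Lemma det_scalar_subZ (R : fieldType) d (B : 'M[R]_d) (I : finType) (c : I -> R) a b :
  char_poly B = \prod_i ('X - (c i)%:P) -> \det (a%:M - b *: B) = \prod_i (a - b * c i).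
Proof.
move=> charB; have cardI : #|I| = d.
  by have := size_char_poly B; rewrite charB size_prod_XsubC cardT enumT => -[].
have [->|b_neq0] := eqVneq b 0.
  rewrite scale0r subr0 det_scalar -cardI -prodr_const.
  by apply: eq_bigr => i _; rewrite mul0r subr0.
have -> : a%:M - b *: B = b *: ((a / b)%:M - B).
  by rewrite scalerBr scale_scalar_mx mulrC divfK.
rewrite detZ -horner_char_poly charB horner_prod -cardI -prodr_const -big_split /=.
by apply: eq_bigr => i _; rewrite hornerXsubC mulrBr mulrC divfK.
Qed.

Lemma rmorph_independent (L E : fieldType) (I : eqType) (sigma : I -> {rmorphism L -> E})
    (s : seq I) (u : I -> E) :
  {in s &, forall j k, sigma j =1 sigma k -> j = k} -> uniq s ->
  (forall x, \sum_(j <- s) u j * sigma j x = 0) -> {in s, forall j, u j = 0}.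
Proof.
elim: s u => [|j0 s IHs] u //= sigma_inj /andP[j0_notin_s uniq_s] sum_eq0.
have sigma_inj_s : {in s &, forall j k, sigma j =1 sigma k -> j = k}.
  by move=> j k js ks; apply: sigma_inj; rewrite inE ?js ?ks orbT.
(* Artin's trick: compare the relation at [y * x] with [sigma j0 y] times the relation at [x]. *)
have shifted_eq0 y : {in s, forall j, u j * (sigma j y - sigma j0 y) = 0}.
  apply: IHs => // x; have := sum_eq0 (y * x); have := sum_eq0 x.
  rewrite !big_cons => sum_x sum_yx.
  have : u j0 * sigma j0 (y * x) + \sum_(j <- s) u j * sigma j (y * x)
      - sigma j0 y * (u j0 * sigma j0 x + \sum_(j <- s) u j * sigma j x) = 0.
    by rewrite sum_x sum_yx mulr0 subr0.
  rewrite mulrDr rmorphM /= opprD addrACA [u j0 * (_ * _)]mulrCA subrr add0r.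
  rewrite mulr_sumr -sumrB; apply: etrans.
  by apply: eq_bigr => j _; rewrite rmorphM /=; ring.
have u_s_eq0 : {in s, forall j, u j = 0}.
  move=> j js; apply/eqP; apply: contraT => uj_neq0.
  have j_eq : j = j0.
    apply: sigma_inj; rewrite ?inE ?js ?eqxx ?orbT // => x; apply/eqP.
    by rewrite -subr_eq0; have /eqP := shifted_eq0 x j js; rewrite mulf_eq0 (negPf uj_neq0).
  by move: j0_notin_s; rewrite -j_eq js.
move=> j; rewrite inE => /predU1P[->|]; last exact: u_s_eq0.
have := sum_eq0 1; rewrite big_cons big_seq big1 ?addr0 ?rmorph1 ?mulr1 // => j1 j1s.
by rewrite u_s_eq0 ?mul0r.
Qed.

Section IntegralBasis.
Variables (M : fieldExtType rat) (m : nat) (omega : 'I_m -> M).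
Hypothesis dimM : \dim {:M} = m.
Hypothesis omega_free : forall c c' : 'I_m -> int,
  \sum_i (c i)%:~R * omega i = \sum_i (c' i)%:~R * omega i -> forall i, c i = c' i.

(* A rational relation becomes an integral one after clearing denominators. *)
Lemma basis_of_omega : basis_of fullv (mktuple omega).
Proof.
rewrite basisEfree subvf size_tuple dimM leqnn andbT /= andbT.
apply/(@freeP _ _ _ (mktuple omega)) => k sum_eq0 i.
pose D := \prod_(l < m) denq (k l).
pose c j := numq (k j) * \prod_(l < m | l != j) denq (k l).
have cE j : (c j)%:~R = k j * D%:~R :> rat.
  by rewrite /c /D [in RHS](bigD1 j) //= !intrM numqE mulrA !rmorph_prod.
have D_neq0 : (D%:~R : rat) != 0.
  by rewrite intr_eq0 prodf_seq_neq0; apply/allP => l _; apply: denq_neq0.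
have c_eq0 : c i = 0.
  apply: (omega_free (c' := fun=> 0)); rewrite [RHS]big1 => [|j _]; last by rewrite mul0r.
  transitivity (D%:~R *: \sum_(i < m) k i *: (mktuple omega)`_i); last first.
    by rewrite sum_eq0 scaler0.
  rewrite scaler_sumr; apply: eq_bigr => j _.
  by rewrite nth_mktuple mulrzl -scaler_int cE scalerA mulrC.
by apply/eqP; move: (cE i); rewrite c_eq0 mulrC => /esym/eqP; rewrite mulf_eq0 (negPf D_neq0).
Qed.

Lemma rmorph_coord (s : {rmorphism M -> algC}) x :
  s x = \sum_i ratr (coord (mktuple omega) i x) * s (omega i).
Proof.
have s_alg q : s q%:A = ratr q := fmorph_eq_rat (s \o in_alg M) q.
rewrite {1}(coord_basis basis_of_omega (memvf x)) rmorph_sum /=.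
by apply: eq_bigr => i _; rewrite nth_mktuple -mulr_algl rmorphM /= s_alg.
Qed.

Variable sigma : 'I_m -> {rmorphism M -> algC}.
Hypothesis sigma_inj : forall j k, (forall x, sigma j x = sigma k x) -> j = k.

Definition emb_mx : 'M[algC]_m := \matrix_(j, i) sigma j (omega i).

Lemma emb_mx_unit : emb_mx \in unitmx.
Proof.
rewrite unitmxE unitfE; apply/negP => /det0P[v /negP v_neq0 v_emb]; apply/v_neq0/eqP.
have v_omega i : \sum_j v 0 j * sigma j (omega i) = 0.
  have := congr1 (fun A : 'rV_m => A 0 i) v_emb; rewrite !mxE => vE; apply: etrans _ vE.
  by apply: eq_bigr => j _; rewrite mxE.
have v_sigma x : \sum_(j <- index_enum 'I_m) v 0 j * sigma j x = 0.
  under eq_bigr do rewrite (rmorph_coord (sigma _)) mulr_sumr.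
  rewrite exchange_big big1 // => i _; under eq_bigr do rewrite mulrCA.
  by rewrite -mulr_sumr v_omega mulr0.
apply/rowP => j; rewrite mxE.
apply: (rmorph_independent _ (index_enum_uniq _) v_sigma); last exact: mem_index_enum.
by move=> j1 j2 _ _; apply: sigma_inj.
Qed.

Lemma coord_norm_le (Z : M) (z : 'I_m -> int) (B : algC) :
    Z = \sum_i (z i)%:~R * omega i -> (forall j, `|sigma j Z| <= B) ->
  forall i, `|(z i)%:~R : algC| <= cmax (fun j : 'I_m => \sum_(i < m) `|invmx emb_mx j i|) * B.
Proof.
move=> Z_def Z_le i; have B_ge0 : 0 <= B := le_trans (normr_ge0 _) (Z_le i).
have emb_z : emb_mx *m \col_i (z i)%:~R = \col_j sigma j Z.
  apply/colP => j; rewrite !mxE Z_def rmorph_sum; apply: eq_bigr => l _.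
  by rewrite !mxE rmorphM /= rmorph_int mulrC.
have -> : (z i)%:~R = \sum_j invmx emb_mx i j * sigma j Z.
  have := congr1 (fun A : 'cV_m => A i 0) (mulKmx emb_mx_unit (\col_i (z i)%:~R)).
  by rewrite emb_z !mxE => <-; apply: eq_bigr => j _; rewrite mxE.
apply: le_trans (ler_norm_sum _ _ _) _.
apply: (@le_trans _ _ ((\sum_j `|invmx emb_mx i j|) * B)).
  by rewrite mulr_suml; apply: ler_sum => j _; rewrite normrM ler_wpM2l.
by rewrite ler_wpM2r // (cmax_ub (fun j => sumr_ge0 _ (fun l _ => normr_ge0 _))).
Qed.

(* The matrix of multiplication by [b] in the basis [omega] is rational and is
   conjugated by [emb_mx] to the diagonal matrix of the [sigma j b]. *)
Lemma prod_rmorph_Crat b : \prod_j sigma j b \in Crat.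
Proof.
pose Bq : 'M[rat]_m := \matrix_(l, i) coord (mktuple omega) l (b * omega i).
have emb_B : emb_mx *m map_mx ratr Bq = diag_mx (\row_j sigma j b) *m emb_mx.
  apply/matrixP => j i; rewrite mul_diag_mx !mxE -rmorphM /= rmorph_coord.
  by apply: eq_bigr => l _; rewrite !mxE mulrC.
have := congr1 determinant emb_B; rewrite !det_mulmx det_map_mx det_diag mulrC.
move/mulIf; rewrite -unitfE -unitmxE => /(_ emb_mx_unit) det_B.
rewrite (eq_bigr (fun j => (\row_j sigma j b) 0 j)) => [|j _]; last by rewrite mxE.
by rewrite -det_B Crat_rat.
Qed.

End IntegralBasis.

Section MatrixRepresentation.
Variables (F : fieldType) (L : fieldExtType F).

Lemma root_char_poly_repr d (phi : {linear L -> 'M[F]_d}) a :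
    (0 < d)%N -> {morph phi : u v / u * v >-> u *m v} -> phi 1 = 1%:M ->
    (forall u, phi u = 0 -> u = 0) ->
  root (map_poly (in_alg L) (char_poly (phi a))) a.
Proof.
case: d phi => // d phi _ phiM phi1 phi_inj.
have phi_horner p : phi (map_poly (in_alg L) p).[a] = horner_mx (phi a) p.
  elim/poly_ind: p => [|p c IHp]; first by rewrite map_poly0 horner0 !linear0.
  rewrite rmorphD rmorphM /= map_polyX map_polyC hornerMXaddC linearD phiM IHp /=.
  by rewrite linearZ /= phi1 scale_scalar_mx mulr1 !rmorphD rmorphM /= horner_mx_X horner_mx_C.
by apply/eqP/phi_inj; rewrite phi_horner Cayley_Hamilton.
Qed.

Definition lmul_mx (b : L) := passmx.mxof (vbasis fullv) (vbasis fullv) (amull b).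

Fact lmul_mx_is_linear : linear lmul_mx.
Proof. by move=> c u v; rewrite /lmul_mx linearP passmx.mxof_linear. Qed.
HB.instance Definition _ := GRing.isSemilinear.Build F L _ _ lmul_mx
  (GRing.semilinear_linear lmul_mx_is_linear).

Lemma relNormE (u : L) : relNorm u = \det (lmul_mx u).
Proof. by []. Qed.

Lemma lmul_mxM u v : lmul_mx (u * v) = lmul_mx u *m lmul_mx v.
Proof.
by rewrite /lmul_mx mulrC amullM -FalgLfun.lfun_compE (passmx.mxof_comp _ _ (vbasisP _)).
Qed.

Lemma lmul_mx1 : lmul_mx 1 = 1%:M.
Proof. by rewrite /lmul_mx amull1 passmx.mxof1 ?(basis_free (vbasisP _)). Qed.

Lemma lmul_mx_alg c : lmul_mx c%:A = c%:M.
Proof. by rewrite linearZ /= lmul_mx1 scale_scalar_mx mulr1. Qed.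

Lemma lmul_mx_eq0 u : (lmul_mx u == 0) = (u == 0).
Proof.
by rewrite (passmx.mxof_eq0 (vbasisP _) (vbasisP _)) -(inj_eq (@amull_inj F L)) linear0.
Qed.

Lemma root_char_poly_lmul_mx a : root (map_poly (in_alg L) (char_poly (lmul_mx a))) a.
Proof.
apply: root_char_poly_repr; [exact: adim_gt0 | exact: lmul_mxM | exact: lmul_mx1 |].
by move=> u /eqP; rewrite lmul_mx_eq0 => /eqP.
Qed.

Lemma relNorm_neq0 (u : L) : u != 0 -> relNorm u != 0.
Proof.
move=> u_neq0; apply/eqP => norm_eq0.
have := congr1 determinant (lmul_mxM u u^-1).
rewrite divff // lmul_mx1 det1 det_mulmx -relNormE norm_eq0 mul0r.
exact/eqP/oner_neq0.
Qed.

End MatrixRepresentation.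

Section MinimalPolynomial.
Variables (F : fieldType) (L : fieldExtType F) (alpha : L) (n : nat) (f : {poly F}).
Hypothesis gen_alpha : <<1; alpha>>%VS = fullv.
Hypothesis dimL : \dim {:L} = n.
Hypothesis f_monic : f \is monic.
Hypothesis size_f : size f = n.+1.
Hypothesis f_root : root (map_poly (in_alg L) f) alpha.

Lemma minpoly_dvdp p : root (map_poly (in_alg L) p) alpha -> f %| p.
Proof.
have f_neq0 : f != 0 by rewrite -size_poly_eq0 size_f.
move=> p_root; apply/modp_eq0P; apply/eqP; rewrite -(map_poly_eq0 (in_alg L)).
rewrite -(root_small_adjoin_poly (K := 1%AS) (x := alpha)).
- move: p_root; rewrite {1}(divp_eq p f) /root rmorphD rmorphM /= hornerD hornerM.
  by rewrite (eqP f_root) mulr0 add0r.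
- by apply/polyOver1P; exists (p %% f).
  have deg_alpha : adjoin_degree 1%AS alpha = n.
    by rewrite -dimL -gen_alpha (dim_Fadjoin 1%AS alpha) dimv1 muln1.
  by rewrite size_map_poly deg_alpha -ltnS -size_f ltn_modp.
Qed.

Lemma char_poly_lmul_mx : char_poly (lmul_mx alpha) = f.
Proof.
apply/esym/eqP; rewrite -eqp_monic ?char_poly_monic // -dvdp_size_eqp.
  by rewrite size_char_poly dimL size_f.
exact/minpoly_dvdp/root_char_poly_lmul_mx.
Qed.

Section Conjugates.
Variables (E : fieldType) (s : {rmorphism F -> E}) (c : 'I_n -> E).
Hypothesis s_f : map_poly s f = \prod_k ('X - (c k)%:P).

Lemma root_conj p k : root (map_poly (in_alg L) p) alpha -> root (map_poly s p) (c k).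
Proof.
move/minpoly_dvdp/dvdpP => [q ->]; rewrite rmorphM /= /root hornerM s_f horner_prod.
by rewrite (bigD1 k) //= hornerXsubC subrr mul0r mulr0.
Qed.

Lemma rmorph_relNorm_pencil a b :
  s (relNorm (a%:A - alpha * b%:A)) = \prod_k (s a - s b * c k).
Proof.
rewrite relNormE linearB /= lmul_mxM !lmul_mx_alg mul_mx_scalar.
rewrite -det_map_mx map_mxB map_mxZ /= map_scalar_mx.
by apply: det_scalar_subZ; rewrite -map_char_poly char_poly_lmul_mx.
Qed.

Lemma rmorph_relNorm : s (relNorm alpha) = \prod_k c k.
Proof.
have -> : alpha = 0%:A - alpha * (-1)%:A by rewrite scale0r sub0r scaleN1r mulrN1 opprK.
rewrite rmorph_relNorm_pencil; apply: eq_bigr => k _.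
by rewrite rmorph0 rmorphN1 sub0r mulN1r opprK.
Qed.

Lemma conj_eq0 k : alpha = 0 -> c k = 0.
Proof.
move=> alpha_eq0; have := root_conj (p := 'X) k.
by rewrite !map_polyX /root !hornerX alpha_eq0 eqxx => /(_ isT)/eqP.
Qed.

End Conjugates.

Lemma conj_Aint (s : {rmorphism F -> algC}) (c : 'I_n -> algC) :
  map_poly s f = \prod_k ('X - (c k)%:P) -> is_alg_int alpha -> forall k, c k \in Aint.
Proof.
move=> s_f [p [p_monic p_root]] k.
have := root_conj s_f (p := map_poly intr p) k; rewrite -!map_poly_comp.
rewrite (eq_map_poly (rmorph_int (in_alg L))) (eq_map_poly (rmorph_int s)).
move=> /(_ p_root) /root_monic_Aint; apply; first exact: monic_map.
by apply/polyOverP => i; rewrite coef_map /= intr_int.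
Qed.

End MinimalPolynomial.

Section RelativeNormEquation.
Variables (M : fieldExtType rat) (m : nat) (omega : 'I_m -> M).
Variable sigma : 'I_m -> {rmorphism M -> algC}.
Hypothesis dimM : \dim {:M} = m.
Hypothesis sigma_inj : forall j k, (forall x, sigma j x = sigma k x) -> j = k.
Hypothesis omega_free : forall c c' : 'I_m -> int,
  \sum_i (c i)%:~R * omega i = \sum_i (c' i)%:~R * omega i -> forall i, c i = c' i.
Variables (K : fieldExtType M) (alpha : K) (n : nat) (f : {poly M}).
Variable conj : 'I_m -> 'I_n -> algC.
Hypothesis gen_alpha : <<1; alpha>>%VS = fullv.
Hypothesis dimK : \dim {:K} = n.
Hypothesis alpha_int : is_alg_int alpha.
Hypothesis f_monic : f \is monic.
Hypothesis size_f : size f = n.+1.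
Hypothesis f_root : root (map_poly (in_alg K) f) alpha.
Hypothesis sigma_f : forall j, map_poly (sigma j) f = \prod_k ('X - (conj j k)%:P).

Local Notation house_alpha := (cmax (fun jk : 'I_m * 'I_n => `|conj jk.1 jk.2|)).

Lemma alpha_neq0_of_house_gt0 : 0 < house_alpha -> alpha != 0.
Proof.
apply: contraTneq => alpha_eq0; rewrite -real_leNgt ?ger0_real ?cmax_ge0 //.
by apply: cmax_le => // -[j k]; rewrite (conj_eq0 gen_alpha dimK size_f f_root (sigma_f j)) ?normr0.
Qed.

Lemma house_alpha_ge1 : alpha != 0 -> 1 <= house_alpha.
Proof.
move=> alpha_neq0.
have prod_conj : \prod_(jk : 'I_m * 'I_n) conj jk.1 jk.2 = \prod_j sigma j (relNorm alpha).
  rewrite -(pair_bigA _ (fun j k => conj j k)) /=; apply: eq_bigr => j _.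
  by rewrite (rmorph_relNorm gen_alpha dimK f_monic size_f f_root (sigma_f j)).
apply: cmax_norm_ge1; first by rewrite card_prod muln_gt0 !card_ord -dimM -dimK !adim_gt0.
  rewrite prod_conj; apply: Cint_rat_Aint; first exact: (prod_rmorph_Crat dimM omega_free sigma_inj).
  rewrite -prod_conj; apply/rpred_prod => jk _.
  exact: (conj_Aint gen_alpha dimK size_f f_root (sigma_f jk.1) alpha_int jk.2).
by rewrite prod_conj prodf_seq_neq0; apply/allP => j _; rewrite fmorph_eq0 relNorm_neq0.
Qed.

Lemma rmorph_le_house (X Y mu : M) :
    relNorm (X%:A - alpha * Y%:A) = mu ->
    n.-root (house sigma mu) < house_alpha * house sigma Y ->
  forall j, `|sigma j X| <= 2 * house_alpha * house sigma Y.
Proof.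
move=> norm_mu Y_big j; set r := n.-root _ in Y_big.
have n_gt0 : (0 < n)%N by rewrite -dimK adim_gt0.
have [k near_X] : exists k, `|sigma j X - sigma j Y * conj j k| <= r.
  apply: exists_norm_le_of_prod; rewrite ?rootC_ge0 ?cmax_ge0 //.
  rewrite -(rmorph_relNorm_pencil gen_alpha dimK f_monic size_f f_root (sigma_f j)) norm_mu.
  by rewrite rootCK // (cmax_ub (fun j => normr_ge0 (sigma j mu))).
rewrite -(subrK (sigma j Y * conj j k) (sigma j X)) -mulrA mulr2n mulrDl mul1r.
apply: le_trans (ler_normD _ _) (lerD (le_trans near_X (ltW Y_big)) _).
rewrite normrM mulrC ler_pM ?(cmax_ub (fun j => normr_ge0 (sigma j Y))) //.
exact: (cmax_ub (fun jk : 'I_m * 'I_n => normr_ge0 (conj jk.1 jk.2)) (j, k)).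
Qed.

End RelativeNormEquation.

Theorem theorem1
  (M : fieldExtType rat) (m : nat) (hm : \dim {:M} = m)
  (sigma : 'I_m -> {rmorphism M -> algC})
  (hsigma : forall j k : 'I_m, (forall x : M, sigma j x = sigma k x) -> j = k)
  (omega : 'I_m -> M)
  (homega1 : forall i : 'I_m, val i = 0%N -> omega i = 1)
  (homega_int : forall i, is_alg_int (omega i))
  (homega_span : forall x : M, is_alg_int x ->
      exists c : 'I_m -> int, x = \sum_i (c i)%:~R * omega i)
  (homega_free : forall c c' : 'I_m -> int,
      \sum_i (c i)%:~R * omega i = \sum_i (c' i)%:~R * omega i ->
      forall i, c i = c' i)
  (K : fieldExtType M) (alpha : K) (n : nat)
  (hK : (<<1; alpha>>)%VS = fullv) (hn : \dim {:K} = n)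
  (halpha : is_alg_int alpha)
  (f : {poly M}) (hfmon : f \is monic) (hfsize : size f = n.+1)
  (hfroot : root (map_poly (in_alg K) f) alpha)
  (conj : 'I_m -> 'I_n -> algC)
  (hconj : forall j : 'I_m,
      map_poly (sigma j) f = \prod_(k < n) ('X - (conj j k)%:P))
  (mu : M) (hmu_int : is_alg_int mu) (hmu0 : mu != 0)
  (X Y : M) (hX : is_alg_int X) (hY : is_alg_int Y)
  (hnorm : relNorm (X%:A - alpha * Y%:A) = mu)
  (hYbig : n.-root (house sigma mu) < cmax (fun jk : 'I_m * 'I_n => `|conj jk.1 jk.2|) * house sigma Y)
  (x y : 'I_m -> int)
  (hx : X = \sum_i (x i)%:~R * omega i)
  (hy : Y = \sum_i (y i)%:~R * omega i) :
  let S : 'M[algC]_m := \matrix_(j, i) sigma j (omega i) in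
  let c2 := cmax (fun j : 'I_m => \sum_(i < m) `|invmx S j i|) in
  let c5 := 2 * c2 * cmax (fun jk : 'I_m * 'I_n => `|conj jk.1 jk.2|) in
  ((\max_(i < m) maxn `|x i|%N `|y i|%N)%N)%:R <= c5 * house sigma Y.
Proof.
cbv zeta; rewrite -[\matrix_(j, i) _]/(emb_mx omega sigma).
set cA := cmax (fun jk : 'I_m * 'I_n => _) in hYbig *.
set c2 := cmax _; set HY := house sigma Y in hYbig *.
have HY_ge0 : 0 <= HY by apply: cmax_ge0.
have c2_ge0 : 0 <= c2 by apply: cmax_ge0 => j; apply: sumr_ge0.
have cA_gt0 : 0 < cA.
  rewrite lt_def cmax_ge0 // andbT; apply: contraTneq hYbig => ->.
  by rewrite mul0r -real_leNgt ?ger0_real ?rootC_ge0 ?cmax_ge0 // -hn adim_gt0.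
have cA_ge1 : 1 <= cA.
  exact/(house_alpha_ge1 hm hsigma homega_free hK hn halpha hfmon hfsize hfroot hconj)
        /(alpha_neq0_of_house_gt0 hK hn hfsize hfroot hconj).
have X_le := rmorph_le_house hK hn hfmon hfsize hfroot hconj hnorm hYbig.
have Y_le j : `|sigma j Y| <= HY := cmax_ub (fun j => normr_ge0 (sigma j Y)) j.
have -> : 2 * c2 * cA * HY = c2 * (2 * cA * HY) by ring.
apply: bigmax_absz_le; first by rewrite mulr_ge0 // !mulr_ge0 // ltW.
  exact: (coord_norm_le hm homega_free hsigma hx X_le).
move=> i; apply: le_trans (coord_norm_le hm homega_free hsigma hy Y_le i) (ler_wpM2l c2_ge0 _).
rewrite ler_peMl // mulr2n mulrDl mul1r; apply: le_trans cA_ge1 _.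
by rewrite lerDl ltW.
Qed.
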